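(* Let $K\in\mathbb{N}_0$. For every $s=(s_1,\dots,s_K)\in\{-,+\}^K$ let $g_s:\mathbb{R}^K\times\mathbb{R}\to\mathbb{R}$ be a continuous function such that for all $(\beta,\gamma)\in\mathbb{R}^K\times\mathbb{R}$: (i) $g_s(\beta,\gamma)$ is strictly increasing in $\gamma$; (ii) for all $k\in\{1,\dots,K\}$, if $s_k=+$ then $g_s(\beta,\gamma)$ is strictly increasing in $\beta_k$; (iii) for all $k\in\{1,\dots,K\}$, if $s_k=-$ then $g_s(\beta,\gamma)$ is strictly decreasing in $\beta_k$. Then the system of $2^K$ equations in $K+1$ variables $g_s(\beta,\gamma)=0$ for all $s\in\{-,+\}^K$ has at most one solution $(\beta,\gamma)$. *)

From HB Require Import structures.
From mathcomp Require Import all_boot all_order all_algebra.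
From mathcomp Require Import all_classical all_reals all_analysis.
Set Implicit Arguments. Unset Strict Implicit. Unset Printing Implicit Defensive.
Import Order.TTheory GRing.Theory Num.Theory.
Local Open Scope ring_scope.

Definition setcoord (R : realType) (K : nat) (beta : 'rV[R]_K) (k : 'I_K) (x : R)
  : 'rV[R]_K := \row_j (if j == k then x else beta 0 j).

(* Sign vectors s in {-,+}^K : true = +, false = -. *)
Definition signs (K : nat) := {ffun 'I_K -> bool}.

From HB Require Import structures.
From mathcomp Require Import all_boot all_order all_algebra.
From mathcomp Require Import all_classical all_reals all_analysis.
Import Order.TTheory GRing.Theory Num.Theory numFieldNormedType.Exports.
Local Open Scope ring_scope.

(* Take the sign pattern s with s_k = + exactly when b1_k < b2_k.  Walking from
   b1 to b2 one coordinate at a time, every move goes in the direction in which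
   g_s increases, so g_s(b1, c) <= g_s(b2, c), strictly unless b1 = b2.  For two
   solutions with c1 <= c2 this gives
   0 = g_s(b1, c1) <= g_s(b2, c1) <= g_s(b2, c2) = 0, and both inequalities
   are forced to be equalities. *)

Definition coord_walk {T : Type} {K : nat} (b1 b2 : 'rV[T]_K) (n : nat)
  : 'rV[T]_K := \row_j (if (j < n)%N then b2 0 j else b1 0 j).

Section CoordWalk.
Context {R : realType} {K : nat} (b1 b2 : 'rV[R]_K).

Lemma coord_walk0 : coord_walk b1 b2 0 = b1.
Proof. by apply/rowP => j; rewrite mxE. Qed.

Lemma coord_walk_ge n : (K <= n)%N -> coord_walk b1 b2 n = b2.
Proof. by move=> leKn; apply/rowP => j; rewrite mxE (leq_trans (ltn_ord j)). Qed.

Lemma coord_walk_at (k : 'I_K) : coord_walk b1 b2 k 0 k = b1 0 k.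
Proof. by rewrite mxE ltnn. Qed.

Lemma setcoord_id (beta : 'rV[R]_K) k : setcoord beta k (beta 0 k) = beta.
Proof. by apply/rowP => j; rewrite mxE; case: eqP => [->|]. Qed.

Lemma setcoord_walk (k : 'I_K) :
  setcoord (coord_walk b1 b2 k) k (b2 0 k) = coord_walk b1 b2 k.+1.
Proof.
apply/rowP => j; rewrite !mxE; case: eqVneq => [->|jk]; first by rewrite ltnSn.
by rewrite ltnS [(j <= k)%N]leq_eqVlt val_eqE (negbTE jk).
Qed.

End CoordWalk.

Section SignMonotone.
Context {R : realType} {K : nat} (s : signs K) (h : 'rV[R]_K -> R).
Hypothesis h_incr : forall beta k x y,
  s k -> x < y -> h (setcoord beta k x) < h (setcoord beta k y).
Hypothesis h_decr : forall beta k x y,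
  ~~ s k -> x < y -> h (setcoord beta k y) < h (setcoord beta k x).

Variables (b1 b2 : 'rV[R]_K).
Hypothesis s_dir : forall k, s k = (b1 0 k < b2 0 k).

Lemma setcoord_lt beta k : b1 0 k != b2 0 k ->
  h (setcoord beta k (b1 0 k)) < h (setcoord beta k (b2 0 k)).
Proof.
case: (ltgtP (b1 0 k) (b2 0 k)) => // [lt12 | lt21] _.
  by apply: h_incr; rewrite ?s_dir.
by apply: h_decr; rewrite // s_dir -leNgt ltW.
Qed.

Let walk n := h (coord_walk b1 b2 n).

Let walk_lt (k : 'I_K) : b1 0 k != b2 0 k -> walk k < walk k.+1.
Proof.
move/(setcoord_lt (coord_walk b1 b2 k)).
by rewrite -{1}(coord_walk_at b1 b2) setcoord_id setcoord_walk.
Qed.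

Let walk_le n : walk n <= walk n.+1.
Proof.
have [ltnK | leKn] := ltnP n K; last by rewrite /walk !coord_walk_ge // ltnW.
pose k := Ordinal ltnK; have [e12 | /walk_lt/ltW //] := eqVneq (b1 0 k) (b2 0 k).
by rewrite /walk -(setcoord_walk b1 b2 k) -e12 -(coord_walk_at b1 b2) setcoord_id.
Qed.

Lemma sign_monotone_leif : h b1 <= h b2 ?= iff (b1 == b2).
Proof.
have walk_mono : {homo walk : m n / (m <= n)%N >-> m <= n}.
  exact: homo_leq le_trans walk_le.
have [walk0 walkK] : walk 0 = h b1 /\ walk K = h b2.
  by rewrite /walk coord_walk0 coord_walk_ge.
rewrite -walk0 -walkK; split; first exact: walk_mono.
have [e12|neq12] := eqVneq b1 b2; first by rewrite walk0 walkK e12 eqxx.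
have [k nek] : exists k, b1 0 k != b2 0 k.
  apply/existsP; apply: contraNT neq12 => /existsPn eq12.
  by apply/eqP/rowP => k; apply/eqP; rewrite -[_ == _]negbK eq12.
rewrite lt_eqF //; apply: le_lt_trans (walk_mono _ _ (leq0n k)) _.
exact: lt_le_trans (walk_lt k nek) (walk_mono _ _ (ltn_ord k)).
Qed.

End SignMonotone.

Theorem lemma2 (R : realType) (K : nat) (g : signs K -> 'rV[R]_K * R -> R) :
  (forall s, continuous (g s)) ->
  (forall (s : signs K) (beta : 'rV[R]_K) (c1 c2 : R), c1 < c2 -> g s (beta, c1) < g s (beta, c2)) ->
  (forall (s : signs K) (beta : 'rV[R]_K) (gamma : R) (k : 'I_K) (x y : R), s k = true -> x < y ->
      g s (setcoord beta k x, gamma) < g s (setcoord beta k y, gamma)) ->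
  (forall (s : signs K) (beta : 'rV[R]_K) (gamma : R) (k : 'I_K) (x y : R), s k = false -> x < y ->
      g s (setcoord beta k y, gamma) < g s (setcoord beta k x, gamma)) ->
  forall (b1 b2 : 'rV[R]_K) (c1 c2 : R),
    (forall s, g s (b1, c1) = 0) -> (forall s, g s (b2, c2) = 0) ->
    b1 = b2 /\ c1 = c2.
Proof.
move=> _ g_incr_gamma g_incr g_decr b1 b2 c1 c2.
wlog le12 : b1 b2 c1 c2 / c1 <= c2 => [wlog_le | zero1 zero2].
  have [le12 | /ltW le21] := leP c1 c2; first exact: wlog_le.
  by move=> zero1 zero2; have [-> ->] := wlog_le b2 b1 c2 c1 le21 zero2 zero1.
pose s : signs K := [ffun k => b1 0 k < b2 0 k].
have [le_b eq_b] : g s (b1, c1) <= g s (b2, c1) ?= iff (b1 == b2).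
  apply: (@sign_monotone_leif R K s (fun beta => g s (beta, c1))).
  - by move=> beta k x y; apply: g_incr.
  - by move=> beta k x y /negbTE; apply: g_decr.
  - by move=> k; rewrite ffunE.
have ec : c1 = c2.
  apply/eqP; rewrite eq_le le12 /= leNgt; apply/negP => /(g_incr_gamma s b2).
  by rewrite zero2 ltNge -(zero1 s) le_b.
subst c2; split=> //; apply/eqP.
by rewrite -eq_b zero1 zero2.
Qed.
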